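(* (1) For every partition $\alpha$ there is an object $N_\alpha(\mathbb Z)=(V,\varphi)$ of $\mathcal N(\mathbb Z)$ such that $N_\alpha(\mathbb Z)\otimes_{\mathbb Z}k\cong N_\alpha(k)$ for every field $k$; moreover $V$ has a $\mathbb Z$-basis in which the matrix of $\varphi$ has all entries in $\{0,1\}$. (2) For every Klein tableau $\Pi$ with entries at most $2$ there is an object $M_\Pi(\mathbb Z)=(V,W,\psi)$ of $\mathcal S(\mathbb Z)$ such that $M_\Pi(\mathbb Z)\otimes_{\mathbb Z}k\cong M_\Pi(k)$ for every field $k$; moreover there are $\mathbb Z$-bases of $V$ and $W$ in which the matrix of $\psi$ has all entries in $\{0,1\}$.
   Context: For a field $k$ and a partition $\alpha$, $N_\alpha(k)=\bigoplus_ik[T]/(T^{\alpha_i})$, viewed as the pair (vector space, nilpotent operator $T$). $\mathcal N(\mathbb Z)$ is the category of pairs $(V,\varphi)$ with $V$ a finitely generated free abelian group and $\varphi$ a nilpotent endomorphism of $V$; $\mathcal S(\mathbb Z)$ is the category of triples $(V,W,\psi)$ with $(V,\varphi),(W,\varphi')$ in $\mathcal N(\mathbb Z)$ and $\psi$ a morphism ($\varphi'\psi=\psi\varphi$). $(V,\varphi)\otimes_{\mathbb Z}k=(V\otimes_{\mathbb Z}k,\varphi\otimes\mathrm{id})$, and similarly for triples. A Klein tableau of type $(\alpha,\beta,\gamma)$ with entries at most $2$ is a filling of the skew Young diagram $\beta\setminus\gamma$ (columns of lengths $\beta_i$, rows numbered from the top; $\bar\alpha$ the conjugate partition) with $\bar\alpha_1$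 entries $1$ and $\bar\alpha_2$ entries $2_r$, weakly increasing along rows, strictly increasing down columns, satisfying the lattice permutation property (for each $c\ge0$ at most as many $2$'s as $1$'s right of column $c$), such that each $2_r$ in row $m$ has $1\le r\le m-1$, $r=m-1$ if the box above contains $1$, and the number of $2_r$'s is at most the number of $1$'s in row $r$. $M_\Pi(k)$ denotes the object $(N_\alpha(k),N_\beta(k),f)$ ($f$ an injective $k[T]$-map with cokernel $\cong N_\gamma(k)$) corresponding to $\Pi$ under the known bijection between isomorphism classes of such embeddings (with $\alpha_1\le 2$) and Klein tableaux; explicitly $M_\Pi(k)$ is a direct sum of pickets $(N_{(\ell)},N_{(m)},\text{inclusion})$, $\ell\le\min\{2,m\}$, and bipickets $(N_{(2)},N_{(m,r)},\delta)$, $1\le r\le m-2$, $\delta(1)=(T^{m-2},T^{r-1})$, determined by $\Pi$. *)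

From HB Require Import structures.
From mathcomp Require Import all_boot all_order all_algebra.
Set Implicit Arguments. Unset Strict Implicit. Unset Printing Implicit Defensive.
Import Order.TTheory GRing.Theory Num.Theory.
Local Open Scope ring_scope.

Definition is_partition (s : seq nat) : bool :=
  sorted geq s && all (fun a => 0 < a)%N s.

(* An object (V, phi) of N(Z) (resp. a pair over a field k) is represented by
   V = R^n with its standard basis and phi : v |-> v *m A. *)
Definition nilpmx (R : nzRingType) n (A : 'M[R]_n) : Prop :=
  exists e : nat, iter e (fun X => X *m A) 1%:M = 0.

(* N_(m)(k) = k[T]/(T^m) in the basis 1, T, ..., T^(m-1): T maps e_i to e_(i+1) *)
Definition jblock (R : nzRingType) (m : nat) : 'M[R]_m :=
  \matrix_(i < m, j < m) (j == i.+1 :> nat)%:R.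

Fixpoint jordan (R : nzRingType) (s : seq nat) : 'M[R]_(sumn s) :=
  match s return 'M[R]_(sumn s) with
  | [::] => 0
  | m :: s' => block_mx (jblock R m) 0 0 (jordan R s')
  end.

Definition niso (K : fieldType) n m (A : 'M[K]_n) (B : 'M[K]_m) : Prop :=
  exists P : 'M[K]_(n, m), [/\ row_free P, row_full P & A *m P = P *m B].

Record trip (R : nzRingType) := Trip {
  tn : nat; tm : nat;
  tA : 'M[R]_tn;          (* operator on V *)
  tB : 'M[R]_tm;          (* operator on W *)
  tPsi : 'M[R]_(tn, tm)   (* psi : V -> W, v |-> v *m tPsi *)
}.

Definition trip0 (R : nzRingType) : trip R := @Trip R 0 0 0 0 0.

Definition dsum (R : nzRingType) (t1 t2 : trip R) : trip R :=
  @Trip R (tn t1 + tn t2) (tm t1 + tm t2)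
    (block_mx (tA t1) 0 0 (tA t2))
    (block_mx (tB t1) 0 0 (tB t2))
    (block_mx (tPsi t1) 0 0 (tPsi t2)).

Definition tiso (K : fieldType) (t1 t2 : trip K) : Prop :=
  exists (P : 'M[K]_(tn t1, tn t2)) (Q : 'M[K]_(tm t1, tm t2)),
    [/\ row_free P && row_full P, row_free Q && row_full Q,
        tA t1 *m P = P *m tA t2, tB t1 *m Q = Q *m tB t2
      & tPsi t1 *m Q = P *m tPsi t2].

(* pickets (N_(l), N_(m), inclusion), the inclusion sending 1 to T^(m-l) *)
Definition picket (R : nzRingType) (l m : nat) : trip R :=
  @Trip R l m (jblock R l) (jblock R m)
    (\matrix_(i < l, j < m) (j == (i + (m - l))%N :> nat)%:R).

(* bipickets (N_(2), N_(m,r), delta) with delta(1) = (T^(m-2), T^(r-1)) *)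
Definition bipicket (R : nzRingType) (m r : nat) : trip R :=
  @Trip R 2 (m + r) (jblock R 2) (block_mx (jblock R m) 0 0 (jblock R r))
    (\matrix_(i < 2, j < m + r)
       (((i == 0%N :> nat) && ((j == (m - 2)%N :> nat) || (j == (m + r - 1)%N :> nat)))
        || ((i == 1%N :> nat) && (j == (m - 1)%N :> nat)))%:R).

Inductive piece := Pick of nat & nat | Bip of nat & nat.

Definition piece_trip (R : nzRingType) (p : piece) : trip R :=
  match p with
  | Pick l m => picket R l m
  | Bip m r => bipicket R m r
  end.

(* entries: One = 1, Two r = 2_r *)
Inductive entry := One | Two of nat.

Definition entry_val (e : entry) : nat := if e is One then 1 else 2.
Definition is_one (e : entry) : bool := if e is One then true else false.
Definition is_two (e : entry) : bool := if e is Two _ then true else false.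
Definition is_two_r (r : nat) (e : entry) : bool :=
  if e is Two r' then r' == r else false.

(* A Klein tableau of type (alpha, beta, gamma): columns are indexed by
   j < size beta (0-based, left to right), column j has length beta_j = nth 0 beta j;
   rows are numbered from the top starting at 1.  The filling is a function
   kf : row -> column -> entry, only its values on boxes of beta \ gamma matter. *)
Record ktab := KTab {
  kalpha : seq nat; kbeta : seq nat; kgamma : seq nat;
  kf : nat -> nat -> entry }.

Definition inskew (b c : seq nat) (i j : nat) : bool :=
  [&& (j < size b)%N, (nth 0 c j < i)%N & (i <= nth 0 b j)%N].

Definition nboxes (b c : seq nat) (P : nat -> nat -> bool) : nat :=
  (\sum_(j < size b) \sum_(1 <= i < (nth 0 b 0).+1 | inskew b c i j) (P i j : nat))%N.

Definition is_klein2 (T : ktab) : Prop :=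
  let a := kalpha T in let b := kbeta T in let c := kgamma T in let f := kf T in
  [/\ is_partition a, is_partition b & is_partition c] /\
      ((size c <= size b)%N /\ (forall j, nth 0 c j <= nth 0 b j)%N) /\
      all (fun x => x <= 2)%N a /\
      (* conj(alpha)_1 entries 1 and conj(alpha)_2 entries 2_r *)
      (nboxes b c (fun i j => is_one (f i j)) = count (fun x => 1 <= x)%N a
        /\ nboxes b c (fun i j => is_two (f i j)) = count (fun x => 2 <= x)%N a) /\
      (forall i j j', inskew b c i j -> inskew b c i j' -> (j < j')%N ->
          (entry_val (f i j) <= entry_val (f i j'))%N) /\
      (forall i i' j, inskew b c i j -> inskew b c i' j -> (i < i')%N ->
          (entry_val (f i j) < entry_val (f i' j))%N) /\
      (* lattice permutation property: for each c0, right of column c0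
         (i.e. 0-based column index j >= c0) at most as many 2's as 1's *)
      (forall c0 : nat,
          (nboxes b c (fun i j => (c0 <= j)%N && is_two (f i j))
           <= nboxes b c (fun i j => (c0 <= j)%N && is_one (f i j)))%N) /\
      (forall i j r, inskew b c i j -> f i j = Two r ->
          [/\ (1 <= r <= i.-1)%N,
              (inskew b c i.-1 j -> f i.-1 j = One -> r = i.-1)
            & (nboxes b c (fun i' j' => is_two_r r (f i' j'))
               <= nboxes b c (fun i' j' => (i' == r) && is_one (f i' j')))%N]).

Section MPi.
Variable T : ktab.
Let b := kbeta T.
Let c := kgamma T.
Let f := kf T.
Let N := nth 0 b 0.   (* number of rows *)

Definition ones_row (m : nat) : nat := nboxes b c (fun i j => (i == m) && is_one (f i j)).
Definition twos_in (m r : nat) : nat := nboxes b c (fun i j => (i == m) && is_two_r r (f i j)).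
Definition twos_r (r : nat) : nat := nboxes b c (fun i j => is_two_r r (f i j)).

Definition mult_P2 (m : nat) : nat := twos_in m m.-1.
Definition mult_B (m r : nat) : nat := if (1 <= r)%N && (r + 2 <= m)%N then twos_in m r else 0%N.
Definition mult_P1 (m : nat) : nat := (ones_row m - twos_r m)%N.
Definition mult_P0 (m : nat) : nat :=
  (count_mem m b - (mult_P1 m + mult_P2 m + \sum_(1 <= r < N.+1) mult_B m r
                    + \sum_(1 <= m' < N.+1) mult_B m' m))%N.

Definition pieces : seq piece :=
  flatten [seq nseq (mult_P0 m) (Pick 0 m) ++ nseq (mult_P1 m) (Pick 1 m)
               ++ (if (2 <= m)%N then nseq (mult_P2 m) (Pick 2 m) else [::])
               ++ flatten [seq nseq (mult_B m r) (Bip m r) | r <- iota 1 N]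
          | m <- iota 1 N].

End MPi.

Definition M_Pi (K : fieldType) (T : ktab) : trip K :=
  foldr (@dsum K) (trip0 K) (map (piece_trip K) (pieces T)).

Definition toK (K : fieldType) n m (A : 'M[int]_(n, m)) : 'M[K]_(n, m) :=
  map_mx (fun z : int => z%:~R) A.

Definition zero_one n m (A : 'M[int]_(n, m)) : Prop :=
  forall i j, A i j = 0 \/ A i j = 1.

From HB Require Import structures.
From mathcomp Require Import all_boot all_order all_algebra.
From mathcomp Require Import zify.
Import GRing.Theory.
Local Open Scope ring_scope.

(* The Jordan blocks and the picket and bipicket maps are 0/1 matrices defined
   over any ring, so their integer versions, in the standard bases, serve as
   N_alpha(Z) and M_Pi(Z): extension of scalars maps them entrywise to the
   field versions and commutes with direct sums.  The only computation is that
   the picket and bipicket maps commute with the nilpotent operators, which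
   already holds over Z. *)

Section RingMatrices.
Variable R : nzRingType.

Lemma natr_bool_eq (b c : bool) : (b <-> c) -> (b%:R : R) = c%:R.
Proof. by move=> [bc cb]; congr (nat_of_bool _)%:R; apply/idP/idP. Qed.

Lemma iter_mulmx0 {n} {A : 'M[R]_n} {e} :
  iter e (fun X => X *m A) 1%:M = 0 -> forall d, iter (d + e) (fun X => X *m A) 1%:M = 0.
Proof. by move=> Ae0; elim => //= d ->; rewrite mul0mx. Qed.

Lemma iter_mulmx_block n1 n2 (A : 'M[R]_n1) (B : 'M[R]_n2) e :
  iter e (fun X => X *m block_mx A 0 0 B) 1%:M =
  block_mx (iter e (fun X => X *m A) 1%:M) 0 0 (iter e (fun X => X *m B) 1%:M).
Proof.
elim: e => [|e IHe] /=; first exact: scalar_mx_block.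
by rewrite IHe mulmx_block !mulmx0 !mul0mx !addr0 !add0r.
Qed.

Lemma nilpmx0 : nilpmx (0 : 'M[R]_0).
Proof. by exists 1%N; rewrite /= mulmx0. Qed.

Lemma nilpmx_block n1 n2 (A : 'M[R]_n1) (B : 'M[R]_n2) :
  nilpmx A -> nilpmx B -> nilpmx (block_mx A 0 0 B).
Proof.
move=> [e1 A0] [e2 B0]; exists (e1 + e2)%N.
have A0' := iter_mulmx0 A0 e2; have B0' := iter_mulmx0 B0 e1.
by rewrite addnC in A0'; rewrite iter_mulmx_block A0' B0' block_mx0.
Qed.

Lemma sum_delta_natl n c (H : nat -> R) :
  \sum_(k < n) ((k == c :> nat)%:R * H k) = if (c < n)%N then H c else 0.
Proof.
elim: n => [|n IHn]; first by rewrite big_ord0.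
rewrite big_ord_recr /= IHn; case: (ltngtP c n) => [c_lt|c_gt|->].
- by rewrite mul0r addr0 ltnS ltnW.
- by rewrite mul0r addr0 ltnS leqNgt c_gt.
- by rewrite mul1r add0r ltnSn.
Qed.

Lemma jblock_iter m e :
  iter e (fun X => X *m jblock R m) 1%:M =
  \matrix_(i < m, j < m) (j == (i + e)%N :> nat)%:R.
Proof.
elim: e => [|e IHe] /=.
  by apply/matrixP => i j; rewrite !mxE addn0 eq_sym.
apply/matrixP => i j; rewrite !mxE IHe; under eq_bigr do rewrite !mxE.
rewrite (sum_delta_natl _ _ (fun k => (j == k.+1 :> nat)%:R)) addnS; case: ifP => // i_lt.
by case: eqP => // j_eq; have := ltn_ord j; lia.
Qed.

Lemma nilpmx_jblock m : nilpmx (jblock R m).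
Proof.
exists m; rewrite jblock_iter; apply/matrixP => i j; rewrite !mxE.
by case: eqP => // j_eq; have := ltn_ord j; lia.
Qed.

Lemma nilpmx_jordan s : nilpmx (jordan R s).
Proof.
by elim: s => [|m s IHs]; [exact: nilpmx0 | exact: nilpmx_block (nilpmx_jblock m) IHs].
Qed.

Lemma jblock_mulmx n p (F : nat -> nat -> bool) :
  jblock R n *m \matrix_(i < n, j < p) ((F i j)%:R : R) =
  \matrix_(i < n, j < p) ((i.+1 < n)%N && F i.+1 j)%:R.
Proof.
apply/matrixP => i j; rewrite !mxE; under eq_bigr do rewrite !mxE.
by rewrite (sum_delta_natl _ _ (fun k => (F k j)%:R)); case: ifP.
Qed.

Lemma mulmx_shift n p (F : nat -> nat -> bool) (S : pred nat) :
  \matrix_(i < n, k < p) ((F i k)%:R : R) *m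
    \matrix_(k < p, j < p) (((j == k.+1 :> nat) && S j)%:R : R) =
  \matrix_(i < n, j < p) [&& (0 < j)%N, S j & F i j.-1]%:R :> 'M[R]_(n, p).
Proof.
apply/matrixP => i j; rewrite !mxE.
rewrite (eq_bigr (fun k : 'I_p => (k == j.-1 :> nat)%:R *
                                  ([&& (0 < j)%N, S j & F i k])%:R)); last first.
  by move=> k _; rewrite !mxE -!natrM !mulnb; apply: natr_bool_eq; lia.
rewrite (sum_delta_natl _ _ (fun k => ([&& (0 < j)%N, S j & F i k])%:R)).
by have := ltn_ord j; case: ifP => [|j_le]; case: (posnP j) => //= j0; lia.
Qed.

(* The trailing [&& true] lets [mulmx_shift] apply with [S := xpredT]. *)
Lemma jblock_shift m :
  jblock R m = \matrix_(k < m, j < m) (((j == k.+1 :> nat) && true)%:R : R).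
Proof. by apply/matrixP => i j; rewrite !mxE andbT. Qed.

Lemma block_jblock_shift m r :
  block_mx (jblock R m) 0 0 (jblock R r) =
  \matrix_(k < m + r, j < m + r) (((j == k.+1 :> nat) && (j != m :> nat))%:R : R).
Proof.
apply/matrixP => k j; rewrite !mxE.
case: (splitP k) => k' k_eq; rewrite !mxE; case: (splitP j) => j' j_eq;
  rewrite !mxE k_eq j_eq; have := ltn_ord j'; have := ltn_ord k'.
all: by move=> k'_lt j'_lt; rewrite -?[0 : R]/(false%:R : R); apply: natr_bool_eq; lia.
Qed.

End RingMatrices.

Lemma picket_commute (R : nzRingType) l m :
  tA (picket R l m) *m tPsi (picket R l m) = tPsi (picket R l m) *m tB (picket R l m).
Proof.
pose F (i j : nat) := j == (i + (m - l))%N.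
change (jblock R l *m \matrix_(i < l, j < m) ((F i j)%:R : R) =
        \matrix_(i < l, j < m) ((F i j)%:R : R) *m jblock R m).
rewrite jblock_mulmx jblock_shift (mulmx_shift _ _ _ _ xpredT).
apply/matrixP => i j; rewrite !mxE /F.
have := ltn_ord i; have := ltn_ord j => j_lt i_lt.
by apply: natr_bool_eq; lia.
Qed.

Lemma bipicket_commute (R : nzRingType) m r : (1 <= r)%N -> (r + 2 <= m)%N ->
  tA (bipicket R m r) *m tPsi (bipicket R m r) =
  tPsi (bipicket R m r) *m tB (bipicket R m r).
Proof.
move=> r_gt0 m_ge.
pose F (i j : nat) := ((i == 0%N) && ((j == (m - 2)%N) || (j == (m + r - 1)%N)))
              || ((i == 1%N) && (j == (m - 1)%N)).
change (jblock R 2 *m \matrix_(i < 2, j < m + r) ((F i j)%:R : R) =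
        \matrix_(i < 2, j < m + r) ((F i j)%:R : R) *m
          block_mx (jblock R m) 0 0 (jblock R r)).
rewrite jblock_mulmx block_jblock_shift (mulmx_shift _ _ _ _ (fun j => j != m)).
apply/matrixP => i j; rewrite !mxE /F.
have := ltn_ord i; have := ltn_ord j => j_lt i_lt.
by apply: natr_bool_eq; lia.
Qed.

Lemma toK_bool (K : fieldType) n m (P : 'I_n -> 'I_m -> bool) :
  toK K (\matrix_(i, j) (P i j)%:R) = \matrix_(i, j) (P i j)%:R.
Proof. by apply/matrixP => i j; rewrite !mxE; case: (P i j). Qed.

Lemma toK_block (K : fieldType) n1 n2 m1 m2
    (A : 'M[int]_(n1, m1)) (B : 'M[int]_(n2, m2)) :
  toK K (block_mx A 0 0 B) = block_mx (toK K A) 0 0 (toK K B).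
Proof. by rewrite /toK map_block_mx !map_mx0. Qed.

Lemma toK_jordan (K : fieldType) s : toK K (jordan int s) = jordan K s.
Proof.
elim: s => [|m s IHs] /=; first by rewrite /toK map_mx0.
by rewrite toK_block IHs /jblock toK_bool.
Qed.

Lemma zero_one_bool n m (P : 'I_n -> 'I_m -> bool) :
  zero_one (\matrix_(i, j) ((P i j)%:R : int)).
Proof. by move=> i j; rewrite !mxE; case: (P i j); [right|left]. Qed.

Lemma zero_one0 n m : zero_one (0 : 'M[int]_(n, m)).
Proof. by move=> i j; rewrite mxE; left. Qed.

Lemma zero_one_block n1 n2 m1 m2 (A : 'M[int]_(n1, m1)) (B : 'M[int]_(n2, m2)) :
  zero_one A -> zero_one B -> zero_one (block_mx A 0 0 B).
Proof.
move=> A01 B01 i j; rewrite !mxE.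
case: (splitP i) => i' _; rewrite ?mxE; case: (splitP j) => j' _; rewrite ?mxE;
  by [apply: A01 | apply: B01 | left].
Qed.

Lemma zero_one_jordan s : zero_one (jordan int s).
Proof.
elim: s => [|m s IHs]; first exact: zero_one0.
by apply: zero_one_block IHs; exact: zero_one_bool.
Qed.

Lemma zero_one_conj1 n m (A : 'M[int]_(n, m)) :
  zero_one A -> zero_one (1%:M *m A *m invmx 1%:M).
Proof. by rewrite invmx1 mul1mx mulmx1. Qed.

Definition trip_toK (K : fieldType) (t : trip int) : trip K :=
  Trip (toK K (tA t)) (toK K (tB t)) (toK K (tPsi t)).

Lemma trip_toK_dsum (K : fieldType) t1 t2 :
  trip_toK K (dsum t1 t2) = dsum (trip_toK K t1) (trip_toK K t2).
Proof. by rewrite /trip_toK /dsum /= !toK_block. Qed.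

Lemma row_free_full_block (K : fieldType) n1 n2 m1 m2
    (P1 : 'M[K]_(n1, m1)) (P2 : 'M[K]_(n2, m2)) :
  row_free P1 && row_full P1 -> row_free P2 && row_full P2 ->
  row_free (block_mx P1 0 0 P2) && row_full (block_mx P1 0 0 P2).
Proof.
rewrite /row_free /row_full rank_diag_block_mx.
by move=> /andP[/eqP-> /eqP->] /andP[/eqP-> /eqP->]; rewrite !eqxx.
Qed.

Lemma tiso_refl (K : fieldType) (t : trip K) : tiso t t.
Proof.
by exists 1%:M, 1%:M; rewrite !row_free_unit !row_full_unit !unitmx1 !mul1mx !mulmx1.
Qed.

Lemma tiso_dsum (K : fieldType) (t1 t2 s1 s2 : trip K) :
  tiso t1 s1 -> tiso t2 s2 -> tiso (dsum t1 t2) (dsum s1 s2).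
Proof.
move=> [P1 [Q1 [P1u Q1u A1 B1 Psi1]]] [P2 [Q2 [P2u Q2u A2 B2 Psi2]]].
exists (block_mx P1 0 0 P2), (block_mx Q1 0 0 Q2).
split; try exact: row_free_full_block P1u P2u; try exact: row_free_full_block Q1u Q2u.
all: by rewrite /= !mulmx_block !mulmx0 !mul0mx !addr0 !add0r ?A1 ?A2 ?B1 ?B2 ?Psi1 ?Psi2.
Qed.

Definition piece_sum (R : nzRingType) (ps : seq piece) : trip R :=
  foldr (@dsum R) (trip0 R) (map (piece_trip R) ps).

Definition piece_wf (p : piece) : bool :=
  if p is Bip m r then (1 <= r)%N && (r + 2 <= m)%N else true.

Lemma all_flatten (T : Type) (a : pred T) (ss : seq (seq T)) :
  all a (flatten ss) = all (all a) ss.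
Proof. by elim: ss => //= s ss IHss; rewrite all_cat IHss. Qed.

Lemma pieces_wf (Pi : ktab) : all piece_wf (pieces Pi).
Proof.
rewrite /pieces all_flatten all_map; apply/allP => m _ /=.
rewrite !all_cat !all_nseq /= !orbT /=; apply/andP; split.
  by case: ifP => // _; rewrite all_nseq orbT.
rewrite all_flatten all_map; apply/allP => r _ /=.
by rewrite all_nseq /mult_B /=; case: ifP => r_ok; rewrite ?r_ok ?orbT.
Qed.

Lemma piece_sum_commute (R : nzRingType) ps : all piece_wf ps ->
  tA (piece_sum R ps) *m tPsi (piece_sum R ps) =
  tPsi (piece_sum R ps) *m tB (piece_sum R ps).
Proof.
elim: ps => [|p ps IHps] //= /andP[p_wf /IHps {}IHps].
rewrite !mulmx_block !mulmx0 !mul0mx !addr0 !add0r IHps.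
case: p p_wf => [l m _|m r /andP[r_gt0 m_ge]] /=.
  by rewrite picket_commute.
by rewrite bipicket_commute.
Qed.

Lemma nilpmx_piece_sumA (R : nzRingType) ps : nilpmx (tA (piece_sum R ps)).
Proof.
elim: ps => [|p ps IHps]; first exact: nilpmx0.
by apply: nilpmx_block IHps; case: p => *; exact: nilpmx_jblock.
Qed.

Lemma nilpmx_piece_sumB (R : nzRingType) ps : nilpmx (tB (piece_sum R ps)).
Proof.
elim: ps => [|p ps IHps]; first exact: nilpmx0.
apply: nilpmx_block IHps; case: p => * /=; first exact: nilpmx_jblock.
by apply: nilpmx_block; exact: nilpmx_jblock.
Qed.

Lemma zero_one_piece_sum ps : zero_one (tPsi (piece_sum int ps)).
Proof.
elim: ps => [|p ps IHps]; first exact: zero_one0.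
by apply: zero_one_block IHps; case: p => *; exact: zero_one_bool.
Qed.

Lemma tiso_piece_sum_toK (K : fieldType) ps :
  tiso (trip_toK K (piece_sum int ps)) (piece_sum K ps).
Proof.
elim: ps => [|p ps IHps] /=.
  by rewrite /trip_toK /= /toK !map_mx0; exact: tiso_refl.
rewrite trip_toK_dsum; apply: tiso_dsum IHps.
case: p => [l m|m r]; rewrite /trip_toK /= /jblock ?toK_block !toK_bool;
  exact: tiso_refl.
Qed.

Theorem lemma5p1 :
  (* (1) *)
  (forall alpha : seq nat, is_partition alpha ->
     exists (n : nat) (A : 'M[int]_n),
       [/\ nilpmx A,
           (forall K : fieldType, niso (toK K A) (jordan K alpha))
         & exists P : 'M[int]_n, P \in unitmx /\ zero_one (P *m A *m invmx P)])
  /\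
  (* (2) *)
  (forall Pi : ktab, is_klein2 Pi ->
     exists (n m : nat) (A : 'M[int]_n) (B : 'M[int]_m) (Psi : 'M[int]_(n, m)),
       [/\ nilpmx A, nilpmx B, A *m Psi = Psi *m B,
           (forall K : fieldType,
               tiso (Trip (toK K A) (toK K B) (toK K Psi)) (M_Pi K Pi))
         & exists (P : 'M[int]_n) (Q : 'M[int]_m),
             [/\ P \in unitmx, Q \in unitmx & zero_one (P *m Psi *m invmx Q)]]).
Proof.
split=> [alpha _ | Pi _].
  exists (sumn alpha), (jordan int alpha); split; first exact: nilpmx_jordan.
    move=> K; exists 1%:M; rewrite row_free_unit row_full_unit unitmx1.
    by rewrite mul1mx mulmx1 toK_jordan.
  by exists 1%:M; split; [exact: unitmx1 | exact/zero_one_conj1/zero_one_jordan].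
set t := piece_sum int (pieces Pi).
exists (tn t), (tm t), (tA t), (tB t), (tPsi t); split.
- exact: nilpmx_piece_sumA.
- exact: nilpmx_piece_sumB.
- exact: piece_sum_commute (pieces_wf Pi).
- by move=> K; exact: tiso_piece_sum_toK.
- exists 1%:M, 1%:M; split; try exact: unitmx1.
  exact/zero_one_conj1/zero_one_piece_sum.
Qed.
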